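(* Let $f(x,y)=\frac12x^\top Px-b^\top x+x^\top Ay-\frac12y^\top Qy+c^\top y$ on $\mathbb{R}^n\times\mathbb{R}^m$ with $P\succeq0$, $Q\succeq0$, and suppose a stationary point of $f$ exists. For $\nu>0$ let $z^*(\nu)$ be the saddle point of $\min_x\max_y f_\nu(x,y)$, where $f_\nu(x,y)=f(x,y)+\frac{\nu}{2}\|x\|^2-\frac{\nu}{2}\|y\|^2$. Then there exist constants $C,\delta_0>0$ such that $\|z^*(\nu_1)-z^*(\nu_2)\|\le C|\nu_1-\nu_2|$ for all $0<\nu_1,\nu_2<\delta_0$ (i.e., the error bound condition holds with exponent $\theta=1$).
   Context: The error bound condition with exponent $\theta\in(0,1]$ means: there exist $C,\delta_0>0$ such that $\|z^*(\nu_1)-z^*(\nu_2)\|\le C|\nu_1-\nu_2|^\theta$ for all $0<\nu_1,\nu_2<\delta_0$. *)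

From HB Require Import structures.
From mathcomp Require Import all_boot all_order all_algebra.
From mathcomp Require Import reals.
Set Implicit Arguments. Unset Strict Implicit. Unset Printing Implicit Defensive.
Import Order.TTheory GRing.Theory Num.Theory.
Local Open Scope ring_scope.

Definition dotv (R : realType) (k : nat) (u v : 'cV[R]_k) : R := (u^T *m v) 0 0.
Definition sqnorm (R : realType) (k : nat) (u : 'cV[R]_k) : R := dotv u u.

Definition pairnorm (R : realType) (n m : nat) (x : 'cV[R]_n) (y : 'cV[R]_m) : R :=
  Num.sqrt (sqnorm x + sqnorm y).

Definition psd (R : realType) (k : nat) (P : 'M[R]_k) : Prop :=
  P^T = P /\ forall x : 'cV[R]_k, 0 <= dotv x (P *m x).

Definition fQ (R : realType) (n m : nat) (P : 'M[R]_n) (Q : 'M[R]_m)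
  (A : 'M[R]_(n, m)) (b : 'cV[R]_n) (c : 'cV[R]_m)
  (x : 'cV[R]_n) (y : 'cV[R]_m) : R :=
  2^-1 * dotv x (P *m x) - dotv b x + dotv x (A *m y)
  - 2^-1 * dotv y (Q *m y) + dotv c y.

Definition fnu (R : realType) (n m : nat) (P : 'M[R]_n) (Q : 'M[R]_m)
  (A : 'M[R]_(n, m)) (b : 'cV[R]_n) (c : 'cV[R]_m) (nu : R)
  (x : 'cV[R]_n) (y : 'cV[R]_m) : R :=
  fQ P Q A b c x y + nu / 2 * sqnorm x - nu / 2 * sqnorm y.

(* Gradients of f (P, Q symmetric) *)
Definition grad_x (R : realType) (n m : nat) (P : 'M[R]_n)
  (A : 'M[R]_(n, m)) (b : 'cV[R]_n) (x : 'cV[R]_n) (y : 'cV[R]_m) : 'cV[R]_n :=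
  P *m x - b + A *m y.
Definition grad_y (R : realType) (n m : nat) (Q : 'M[R]_m)
  (A : 'M[R]_(n, m)) (c : 'cV[R]_m) (x : 'cV[R]_n) (y : 'cV[R]_m) : 'cV[R]_m :=
  A^T *m x - Q *m y + c.

Definition saddle_point (R : realType) (n m : nat)
  (g : 'cV[R]_n -> 'cV[R]_m -> R) (xs : 'cV[R]_n) (ys : 'cV[R]_m) : Prop :=
  forall (x : 'cV[R]_n) (y : 'cV[R]_m), g xs y <= g xs ys /\ g xs ys <= g x ys.

From HB Require Import structures.
From mathcomp Require Import all_boot all_order all_algebra.
From mathcomp Require Import reals.
From mathcomp Require Import ring lra.
Set Implicit Arguments. Unset Strict Implicit. Unset Printing Implicit Defensive.
Import Order.TTheory GRing.Theory Num.Theory.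
Local Open Scope ring_scope.

(* Write z = (x, y) and M = [[P, A], [-A^T, Q]], so that z^T M z = x^T P x + y^T Q y
   and M is monotone.  The saddle point z_nu of f_nu solves M z_nu + nu z_nu = q with
   q = (b, c), while a stationary point z0 of f solves M z0 = q.  Monotonicity of M
   gives |z_nu| <= |z0| and |M (z1 - z2)| = |nu2 z2 - nu1 z1| <= |nu1 - nu2| |z2|.
   Finally z1 - z2 lies in the range of M, on which M is injective (a vector in
   ker M and range M is 0 for monotone M) and hence boundedly invertible. *)

Section Quadratic.
Variable R : realFieldType.

Lemma quadratic_ge0_discr (a b c : R) :
  0 < a -> (forall t, 0 <= a * t ^+ 2 + b * t + c) -> b ^+ 2 <= 4 * a * c.
Proof.
move=> a_gt0 /(_ (- b / (2 * a))).
have -> : a * (- b / (2 * a)) ^+ 2 + b * (- b / (2 * a)) + c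
          = (4 * a * c - b ^+ 2) / (4 * a) by field; rewrite gt_eqF.
by rewrite pmulr_lge0 ?invr_gt0 ?mulr_gt0 // subr_ge0.
Qed.

Lemma quadratic_ge0_linear_eq0 (a b : R) :
  0 <= a -> (forall t, 0 <= a * t ^+ 2 + b * t) -> b = 0.
Proof.
move=> a_ge0 ge0; apply/eqP; rewrite -sqrf_eq0 eq_le sqr_ge0 andbT.
have := @quadratic_ge0_discr (a + 1) b 0; rewrite mulr0.
apply; first by rewrite ltr_wpDl.
by move=> t; have := ge0 t; have := sqr_ge0 t; rewrite mulrDl mul1r; lra.
Qed.

End Quadratic.

Section DotProduct.
Variables (R : realType) (k : nat).
Implicit Types (u v w : 'cV[R]_k) (a : R).

Lemma dotvE u v : dotv u v = \sum_i u i 0 * v i 0.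
Proof. by rewrite /dotv mxE; apply: eq_bigr => i _; rewrite mxE. Qed.

Lemma dotvC u v : dotv u v = dotv v u.
Proof. by rewrite !dotvE; apply: eq_bigr => i _; rewrite mulrC. Qed.

Lemma dotvDl u v w : dotv (u + v) w = dotv u w + dotv v w.
Proof. by rewrite /dotv linearD mulmxDl mxE. Qed.

Lemma dotvDr u v w : dotv w (u + v) = dotv w u + dotv w v.
Proof. by rewrite /dotv mulmxDr mxE. Qed.

Lemma dotvZl a u w : dotv (a *: u) w = a * dotv u w.
Proof. by rewrite /dotv linearZ -scalemxAl mxE. Qed.

Lemma dotvZr a u w : dotv w (a *: u) = a * dotv w u.
Proof. by rewrite /dotv -scalemxAr mxE. Qed.

Lemma dotvNl u w : dotv (- u) w = - dotv u w.
Proof. by rewrite -scaleN1r dotvZl mulN1r. Qed.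

Lemma dotvNr u w : dotv w (- u) = - dotv w u.
Proof. by rewrite -scaleN1r dotvZr mulN1r. Qed.

Lemma dotvBl u v w : dotv (u - v) w = dotv u w - dotv v w.
Proof. by rewrite dotvDl dotvNl. Qed.

Lemma dotvBr u v w : dotv w (u - v) = dotv w u - dotv w v.
Proof. by rewrite dotvDr dotvNr. Qed.

Lemma dotv_mulmx l (B : 'M[R]_(k, l)) u (v : 'cV[R]_l) :
  dotv u (B *m v) = dotv (B^T *m u) v.
Proof. by rewrite /dotv trmx_mul trmxK mulmxA. Qed.

Lemma sqnormE u : sqnorm u = \sum_i u i 0 ^+ 2.
Proof. by rewrite /sqnorm dotvE; apply: eq_bigr => i _; rewrite expr2. Qed.

Lemma sqnorm_ge0 u : 0 <= sqnorm u.
Proof. by rewrite sqnormE sumr_ge0 // => i _; rewrite sqr_ge0. Qed.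

Lemma sqnorm_eq0 u : sqnorm u = 0 -> u = 0.
Proof.
rewrite sqnormE => /eqP; rewrite psumr_eq0 => [/allP u0|i _]; last exact: sqr_ge0.
apply/matrixP => i j; rewrite (ord1 j) mxE.
by apply/eqP; rewrite -sqrf_eq0; apply: u0; rewrite mem_index_enum.
Qed.

Lemma dotv_sqr_le u v : dotv u v ^+ 2 <= sqnorm u * sqnorm v.
Proof.
have [/sqnorm_eq0 ->|u_neq0] := eqVneq (sqnorm u) 0.
  by rewrite dotvC /dotv mulmx0 mxE expr0n /= mulr_ge0 ?sqnorm_ge0.
have u_gt0 : 0 < sqnorm u by rewrite lt_def u_neq0 sqnorm_ge0.
have expand t : sqnorm (t *: u + v)
                = sqnorm u * t ^+ 2 + 2 * dotv u v * t + sqnorm v.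
  rewrite /sqnorm !(dotvDl, dotvDr, dotvZl, dotvZr) (dotvC v u); ring.
have : (2 * dotv u v) ^+ 2 <= 4 * sqnorm u * sqnorm v.
  by apply: quadratic_ge0_discr => // t; rewrite -expand sqnorm_ge0.
rewrite exprMn -mulrA; nra.
Qed.

End DotProduct.

Lemma sqnorm_mulmx_le (R : realType) k l (B : 'M[R]_(l, k)) (u : 'cV[R]_k) :
  sqnorm (B *m u) <= (\sum_i sqnorm (row i B)^T) * sqnorm u.
Proof.
rewrite [sqnorm (B *m u)]sqnormE mulr_suml; apply: ler_sum => i _.
have -> : (B *m u) i 0 = dotv (row i B)^T u by rewrite /dotv trmxK -row_mul !mxE.
exact: dotv_sqr_le.
Qed.

Lemma dotv_col_mx (R : realType) n m (x u : 'cV[R]_n) (y v : 'cV[R]_m) :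
  dotv (col_mx x y) (col_mx u v) = dotv x u + dotv y v.
Proof. by rewrite /dotv tr_col_mx mul_row_col mxE. Qed.

Definition monotone_mx (R : realType) k (M : 'M[R]_k) : Prop :=
  forall w : 'cV[R]_k, 0 <= dotv w (M *m w).

Section Monotone.
Variables (R : realType) (k : nat) (M : 'M[R]_k).
Hypothesis M_mono : monotone_mx M.
Implicit Types (u v w p z : 'cV[R]_k).

Lemma monotone_ker_range p v : M *m p = 0 -> p = M *m v -> p = 0.
Proof.
move=> Mp0 p_range; apply: sqnorm_eq0.
suff p_orth w : dotv p (M *m w) = 0 by rewrite /sqnorm {2}p_range p_orth.
apply: (@quadratic_ge0_linear_eq0 _ (dotv w (M *m w))) => // t.
have := M_mono (p + t *: w).
rewrite mulmxDr -scalemxAr Mp0 add0r dotvDl !dotvZr dotvZl mulrA -expr2.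
by rewrite addrC [t * _]mulrC [_ * t ^+ 2]mulrC.
Qed.

(* M is injective on its range, so M u is determined by M (M u); a pseudo-inverse
   of M M makes the dependence linear. *)
Lemma monotone_range_left_inverse :
  exists L : 'M[R]_k, forall u, M *m u = L *m (M *m (M *m u)).
Proof.
pose T := M^T; exists (pinvmx (T *m T) *m T)^T => u.
set y := (M *m (M *m u))^T.
set s := y *m pinvmx (T *m T).
have s_TT : s *m (T *m T) = y.
  by rewrite mulmxKpV // /y !trmx_mul -mulmxA submxMl.
have M_sT : (s *m T)^T = M *m s^T by rewrite trmx_mul trmxK.
have MM_sT : M *m M *m s^T = y^T.
  by rewrite -[y in RHS]s_TT [RHS]trmx_mul [(T *m T)^T]trmx_mul /T trmxK.
have Mu_eq : M *m u = (s *m T)^T.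
  apply/eqP; rewrite eq_sym -subr_eq0; apply/eqP.
  apply: (@monotone_ker_range _ (s^T - u)); last by rewrite M_sT mulmxBr.
  by rewrite mulmxBr M_sT mulmxA MM_sT trmxK subrr.
by rewrite [LHS]Mu_eq /s -mulmxA trmx_mul /y trmxK.
Qed.

Lemma monotone_range_bound :
  exists K, 0 <= K /\ forall u, sqnorm (M *m u) <= K * sqnorm (M *m (M *m u)).
Proof.
have [L L_inv] := monotone_range_left_inverse.
exists (\sum_i sqnorm (row i L)^T); split.
  by apply: sumr_ge0 => i _; exact: sqnorm_ge0.
by move=> u; rewrite {1}L_inv; exact: sqnorm_mulmx_le.
Qed.

Variables (q z0 : 'cV[R]_k).
Hypothesis Mz0 : M *m z0 = q.

Lemma regularized_sqnorm_le nu z :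
  0 < nu -> M *m z + nu *: z = q -> sqnorm z <= sqnorm z0.
Proof.
move=> nu_gt0 Mz; have z_z0 : dotv z z <= dotv z0 z.
  have := M_mono (z - z0).
  rewrite mulmxBr Mz0 -Mz opprD addrA subrr add0r dotvNr dotvZr dotvBl oppr_ge0.
  by rewrite pmulr_rle0 // subr_le0.
have := sqnorm_ge0 (z - z0).
rewrite /sqnorm !(dotvBl, dotvBr) (dotvC z z0); lra.
Qed.

Lemma regularized_mulmx_diff nu1 nu2 z1 z2 :
  M *m z1 + nu1 *: z1 = q -> M *m z2 + nu2 *: z2 = q ->
  M *m (z1 - z2) = nu2 *: z2 - nu1 *: z1.
Proof.
move=> Mz1 Mz2.
have Mz1' : M *m z1 = q - nu1 *: z1 by rewrite -Mz1 addrK.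
have Mz2' : M *m z2 = q - nu2 *: z2 by rewrite -Mz2 addrK.
by rewrite mulmxBr Mz1' Mz2' opprB addrC addrA subrK.
Qed.

Lemma regularized_scaled_diff_le nu1 nu2 z1 z2 :
  0 <= nu1 -> M *m z1 + nu1 *: z1 = q -> M *m z2 + nu2 *: z2 = q ->
  sqnorm (nu2 *: z2 - nu1 *: z1) <= (nu1 - nu2) ^+ 2 * sqnorm z2.
Proof.
move=> nu1_ge0 Mz1 Mz2.
have := mulr_ge0 nu1_ge0 (M_mono (z1 - z2)).
rewrite (regularized_mulmx_diff Mz1 Mz2).
have := mulr_ge0 (sqr_ge0 nu1) (sqnorm_ge0 (z1 - z2)).
suff -> : sqnorm (nu2 *: z2 - nu1 *: z1) = (nu1 - nu2) ^+ 2 * sqnorm z2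
  - 2 * (nu1 * dotv (z1 - z2) (nu2 *: z2 - nu1 *: z1)) - nu1 ^+ 2 * sqnorm (z1 - z2).
  by lra.
by rewrite /sqnorm !(dotvBl, dotvBr, dotvZl, dotvZr) (dotvC z2 z1); ring.
Qed.

Lemma regularized_diff_in_range nu1 nu2 z1 z2 :
  0 < nu1 -> 0 < nu2 -> M *m z1 + nu1 *: z1 = q -> M *m z2 + nu2 *: z2 = q ->
  z1 - z2 = M *m (nu1^-1 *: (z0 - z1) - nu2^-1 *: (z0 - z2)).
Proof.
move=> nu1_gt0 nu2_gt0 Mz1 Mz2.
rewrite mulmxBr -!scalemxAr !mulmxBr Mz0 -{1}Mz1 -Mz2.
rewrite [M *m z1 + _]addrC [M *m z2 + _]addrC !addrK.
by rewrite !scalerA !mulVf ?gt_eqF // !scale1r.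
Qed.

Lemma regularized_solution_lipschitz :
  exists K, 0 <= K /\ forall nu1 nu2 z1 z2, 0 < nu1 -> 0 < nu2 ->
    M *m z1 + nu1 *: z1 = q -> M *m z2 + nu2 *: z2 = q ->
    sqnorm (z1 - z2) <= K * (nu1 - nu2) ^+ 2.
Proof.
have [K [K_ge0 K_bound]] := monotone_range_bound.
exists (K * sqnorm z0); split=> [|nu1 nu2 z1 z2 nu1_gt0 nu2_gt0 Mz1 Mz2].
  by rewrite mulr_ge0 ?sqnorm_ge0.
have in_range := regularized_diff_in_range nu1_gt0 nu2_gt0 Mz1 Mz2.
apply: le_trans (_ : K * sqnorm (nu2 *: z2 - nu1 *: z1) <= _).
  by rewrite -(regularized_mulmx_diff Mz1 Mz2) {1 2}in_range K_bound.
rewrite -mulrA ler_wpM2l // mulrC.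
apply: le_trans (regularized_scaled_diff_le (ltW nu1_gt0) Mz1 Mz2) _.
by rewrite ler_wpM2l ?sqr_ge0 ?(regularized_sqnorm_le nu2_gt0 Mz2).
Qed.

End Monotone.

Lemma first_order_optimality (R : realType) k (G : 'cV[R]_k) (beta : 'cV[R]_k -> R) :
  (forall d, 0 <= beta d) -> (forall d t, 0 <= beta d * t ^+ 2 + dotv G d * t) ->
  G = 0.
Proof.
move=> beta_ge0 growth; apply: sqnorm_eq0.
exact: quadratic_ge0_linear_eq0 (beta_ge0 G) (growth G).
Qed.

Section SaddleProblem.
Variables (R : realType) (n m : nat) (P : 'M[R]_n) (Q : 'M[R]_m).
Variables (A : 'M[R]_(n, m)) (b : 'cV[R]_n) (c : 'cV[R]_m).
Implicit Types (x d : 'cV[R]_n) (y e : 'cV[R]_m) (nu t : R).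

Lemma fnu_shift_x nu x y d t : P^T = P ->
  fnu P Q A b c nu (x + t *: d) y - fnu P Q A b c nu x y
  = (2^-1 * dotv d (P *m d) + nu / 2 * sqnorm d) * t ^+ 2
    + dotv (grad_x P A b x y + nu *: x) d * t.
Proof.
move=> P_sym; rewrite /fnu /fQ /grad_x /sqnorm mulmxDr -scalemxAr.
rewrite !(dotvDl, dotvDr, dotvBl, dotvNl, dotvZl, dotvZr).
rewrite (dotv_mulmx P x d) P_sym (dotvC (P *m x) d) (dotvC (A *m y)) (dotvC d x).
by field.
Qed.

Lemma fnu_shift_y nu x y e t : Q^T = Q ->
  fnu P Q A b c nu x y - fnu P Q A b c nu x (y + t *: e)
  = (2^-1 * dotv e (Q *m e) + nu / 2 * sqnorm e) * t ^+ 2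
    + dotv (nu *: y - grad_y Q A c x y) e * t.
Proof.
move=> Q_sym; rewrite /fnu /fQ /grad_y /sqnorm !mulmxDr -!scalemxAr.
rewrite !(dotvDl, dotvDr, dotvBl, dotvNl, dotvZl, dotvZr).
rewrite (dotv_mulmx A x e) (dotv_mulmx Q y e) Q_sym (dotvC e (Q *m y)) (dotvC e y).
by field.
Qed.

Lemma saddle_point_grad_eq0 nu xs ys :
  psd P -> psd Q -> 0 <= nu -> saddle_point (fnu P Q A b c nu) xs ys ->
  grad_x P A b xs ys + nu *: xs = 0 /\ nu *: ys - grad_y Q A c xs ys = 0.
Proof.
move=> [P_sym P_ge0] [Q_sym Q_ge0] nu_ge0 saddle.
have beta_ge0 k (M : 'M[R]_k) : (forall v, 0 <= dotv v (M *m v)) ->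
    forall v, 0 <= 2^-1 * dotv v (M *m v) + nu / 2 * sqnorm v.
  by move=> M_ge0 v; have := M_ge0 v; have := sqnorm_ge0 v; nra.
split.
  apply: (first_order_optimality (beta_ge0 _ _ P_ge0)) => d t.
  by rewrite -fnu_shift_x // subr_ge0; case: (saddle (xs + t *: d) ys).
apply: (first_order_optimality (beta_ge0 _ _ Q_ge0)) => e t.
by rewrite -fnu_shift_y // subr_ge0; case: (saddle xs (ys + t *: e)).
Qed.

Definition saddle_mx : 'M[R]_(n + m) := block_mx P A (- A^T) Q.

Lemma saddle_mx_monotone : psd P -> psd Q -> monotone_mx saddle_mx.
Proof.
move=> [_ P_ge0] [_ Q_ge0] w; rewrite -[w]vsubmxK mul_block_col dotv_col_mx.
rewrite !dotvDr mulNmx dotvNr (dotv_mulmx A) (dotvC (dsubmx w)) addrA addrK.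
exact: addr_ge0.
Qed.

Lemma saddle_mx_col x y :
  saddle_mx *m col_mx x y = col_mx (grad_x P A b x y + b) (c - grad_y Q A c x y).
Proof.
rewrite mul_block_col mulNmx /grad_x /grad_y; congr col_mx.
  by rewrite addrAC subrK.
by rewrite !opprD opprK [RHS]addrC subrK.
Qed.

Lemma saddle_point_regularized_eq nu xs ys :
  psd P -> psd Q -> 0 <= nu -> saddle_point (fnu P Q A b c nu) xs ys ->
  saddle_mx *m col_mx xs ys + nu *: col_mx xs ys = col_mx b c.
Proof.
move=> P_psd Q_psd nu_ge0 /(saddle_point_grad_eq0 P_psd Q_psd nu_ge0) [gx gy].
rewrite saddle_mx_col scale_col_mx add_col_mx; congr col_mx.
  by rewrite addrAC gx add0r.
by rewrite -addrA [- _ + _]addrC gy addr0.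
Qed.

End SaddleProblem.

Lemma pairnorm_col_mx (R : realType) n m (x : 'cV[R]_n) (y : 'cV[R]_m) :
  pairnorm x y = Num.sqrt (sqnorm (col_mx x y)).
Proof. by rewrite /pairnorm /sqnorm dotv_col_mx. Qed.

Theorem proposition5p3 (R : realType) (n m : nat) (P : 'M[R]_n) (Q : 'M[R]_m)
  (A : 'M[R]_(n, m)) (b : 'cV[R]_n) (c : 'cV[R]_m) :
  psd P -> psd Q ->
  (exists (x0 : 'cV[R]_n) (y0 : 'cV[R]_m),
      grad_x P A b x0 y0 = 0 /\ grad_y Q A c x0 y0 = 0) ->
  exists C delta0 : R, 0 < C /\ 0 < delta0 /\
    forall (nu1 nu2 : R) (x1 x2 : 'cV[R]_n) (y1 y2 : 'cV[R]_m),
      0 < nu1 < delta0 -> 0 < nu2 < delta0 ->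
      saddle_point (fnu P Q A b c nu1) x1 y1 ->
      saddle_point (fnu P Q A b c nu2) x2 y2 ->
      pairnorm (x1 - x2) (y1 - y2) <= C * `|nu1 - nu2|.
Proof.
move=> P_psd Q_psd [x0 [y0 [gx0 gy0]]].
have Mz0 : saddle_mx P Q A *m col_mx x0 y0 = col_mx b c.
  by rewrite (saddle_mx_col _ _ _ b c) gx0 gy0 add0r subr0.
have [K [K_ge0 lipschitz]] :=
  regularized_solution_lipschitz (saddle_mx_monotone A P_psd Q_psd) Mz0.
exists (Num.sqrt (K + 1)), 1; split; first by rewrite sqrtr_gt0 ltr_wpDl.
split=> // nu1 nu2 x1 x2 y1 y2 /andP[nu1_gt0 _] /andP[nu2_gt0 _] S1 S2.
have Mz1 := saddle_point_regularized_eq P_psd Q_psd (ltW nu1_gt0) S1.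
have Mz2 := saddle_point_regularized_eq P_psd Q_psd (ltW nu2_gt0) S2.
rewrite pairnorm_col_mx -add_col_mx -opp_col_mx -sqrtr_sqr -sqrtrM ?ler_wsqrtr //.
  apply: le_trans (lipschitz _ _ _ _ nu1_gt0 nu2_gt0 Mz1 Mz2) _.
  by rewrite ler_wpM2r ?sqr_ge0 ?lerDl.
by rewrite addr_ge0.
Qed.
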